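(* Let $S,T$ be left inverse semi-braces, $\sigma:T\to\mathrm{Aut}(S)$ a homomorphism from $(T,\cdot)$ into the automorphism group of the left inverse semi-brace $S$ (write ${}^ua=\sigma(u)(a)$), $\delta:S\to\mathrm{End}(T)$ a map into the endomorphism semigroup of $(T,+)$ (write $u^a=\delta(a)(u)$), and $\mathfrak b:S\times S\to T$ a $\delta$-cocycle such that $$\mathfrak b\left(a\,{}^ub,\lambda_a({}^uc)\right)+(uv)^{\lambda_a({}^uc)}+u\left(\mathfrak b\left({}^{u^{-1}}(a^{-1}),c\right)+(u^{-1})^c\right)=u\left(\mathfrak b(b,c)+v^c\right)$$ for all $a,b,c\in S$ and $u,v\in T$. Then $S\times T$ with $$(a,u)+(b,v)=\left(a+b,\ \mathfrak b(a,b)+u^b+v\right),\qquad (a,u)(b,v)=(a\,{}^ub,\,uv)$$ is a left inverse semi-brace (the asymmetric product of $S$ and $T$ via $\sigma$, $\delta$, $\mathfrak b$).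
   Context: An inverse semigroup is a semigroup $(S,\cdot)$ in which for each $a$ there is a unique $a^{-1}$ with $aa^{-1}a=a$, $a^{-1}aa^{-1}=a^{-1}$. A left inverse semi-brace is a triple $(S,+,\cdot)$ with $(S,+)$ a semigroup, $(S,\cdot)$ an inverse semigroup and $a(b+c)=ab+a(a^{-1}+c)$ for all $a,b,c$; set $\lambda_a(b)=a(a^{-1}+b)$. An automorphism of the left inverse semi-brace $S$ is a bijection preserving both operations. Given semigroups $(S,+)$, $(T,+)$ and a map $\delta:S\to\mathrm{End}(T,+)$ with $u^a=\delta(a)(u)$, a $\delta$-cocycle is a map $\mathfrak b:S\times S\to T$ such that $\mathfrak b(a+b,c)+\mathfrak b(a,b)^c+(u^b)^c+v^c=\mathfrak b(a,b+c)+u^{b+c}+\mathfrak b(b,c)+v^c$ for all $a,b,c\in S$, $u,v\in T$. *)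

From mathcomp Require Import ssreflect ssrfun ssrbool.

Set Implicit Arguments.
Unset Strict Implicit.

Definition is_inverse_semigroup (S : Type) (mul : S -> S -> S) (inv : S -> S) : Prop :=
  associative mul /\
  (forall a : S,
     mul (mul a (inv a)) a = a /\ mul (mul (inv a) a) (inv a) = inv a) /\
  (forall a b : S,
     mul (mul a b) a = a -> mul (mul b a) b = b -> b = inv a).

Definition is_left_inverse_semibrace (S : Type)
    (add mul : S -> S -> S) (inv : S -> S) : Prop :=
  associative add /\
  is_inverse_semigroup mul inv /\
  (forall a b c : S, mul a (add b c) = add (mul a b) (mul a (add (inv a) c))).

Definition lambda (S : Type) (add mul : S -> S -> S) (inv : S -> S) (a b : S) : S :=
  mul a (add (inv a) b).

Definition is_semibrace_automorphism (S : Type) (add mul : S -> S -> S)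
    (f : S -> S) : Prop :=
  bijective f /\
  (forall a b, f (add a b) = add (f a) (f b)) /\
  (forall a b, f (mul a b) = mul (f a) (f b)).

Definition is_semigroup_endomorphism (T : Type) (add : T -> T -> T) (f : T -> T) : Prop :=
  forall u v, f (add u v) = add (f u) (f v).

Definition is_delta_cocycle (S T : Type) (addS : S -> S -> S) (addT : T -> T -> T)
    (delta : S -> T -> T) (bb : S -> S -> T) : Prop :=
  forall (a b c : S) (u v : T),
    addT (addT (addT (bb (addS a b) c) (delta c (bb a b))) (delta c (delta b u)))
         (delta c v)
    = addT (addT (addT (bb a (addS b c)) (delta (addS b c) u)) (bb b c)) (delta c v).

Definition asym_add (S T : Type) (addS : S -> S -> S) (addT : T -> T -> T)
    (delta : S -> T -> T) (bb : S -> S -> T) (x y : S * T) : S * T :=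
  (addS x.1 y.1, addT (addT (bb x.1 y.1) (delta y.1 x.2)) y.2).

Definition asym_mul (S T : Type) (mulS : S -> S -> S) (mulT : T -> T -> T)
    (sigma : T -> S -> S) (x y : S * T) : S * T :=
  (mulS x.1 (sigma x.2 y.1), mulT x.2 y.2).

From mathcomp Require Import ssreflect ssrfun ssrbool.

(* Multiplicatively, S x T is the semidirect product of the inverse semigroups
   (S, .) and (T, .) along sigma.  For an idempotent e of T the map sigma e is
   an injective idempotent map, hence the identity; this makes
   (a, u)^-1 = (^{u^-1}(a^-1), u^-1) the unique inverse.  Associativity of the
   sum is the cocycle identity, and the brace identity holds in the first
   component by that of S, and in the second by that of T, which reduces it
   to the compatibility hypothesis on bb. *)

Section AsymmetricProduct.

Variables (S T : Type).
Variables (addS mulS : S -> S -> S) (invS : S -> S).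
Variables (addT mulT : T -> T -> T) (invT : T -> T).
Variables (sigma : T -> S -> S) (delta : S -> T -> T) (bb : S -> S -> T).

Local Notation addST := (asym_add addS addT delta bb).
Local Notation mulST := (asym_mul mulS mulT sigma).

Hypotheses (addSA : associative addS) (addTA : associative addT).
Hypothesis delta_endo : forall a, is_semigroup_endomorphism addT (delta a).
Hypothesis bb_cocycle : is_delta_cocycle addS addT delta bb.

Lemma asym_addA : associative addST.
Proof.
move=> [a u] [b v] [c w]; rewrite /asym_add /=.
have := f_equal (addT^~ w) (bb_cocycle a b c u v).
by rewrite /= -!addTA => cocycle_w; rewrite !delta_endo -!addTA addSA cocycle_w.
Qed.

Hypotheses (mulSA : associative mulS) (mulTA : associative mulT).
Hypothesis sigmaM : forall u a b, sigma u (mulS a b) = mulS (sigma u a) (sigma u b).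
Hypothesis sigma_action : forall u v a, sigma (mulT u v) a = sigma u (sigma v a).

Lemma asym_mulA : associative mulST.
Proof.
by move=> [a u] [b v] [c w]; rewrite /asym_mul /= sigmaM sigma_action mulSA mulTA.
Qed.

Hypothesis sigma_inj : forall u, injective (sigma u).
Hypothesis invS_regular : forall a,
  mulS (mulS a (invS a)) a = a /\ mulS (mulS (invS a) a) (invS a) = invS a.
Hypothesis invS_unique : forall a b,
  mulS (mulS a b) a = a -> mulS (mulS b a) b = b -> b = invS a.
Hypothesis invT_regular : forall u,
  mulT (mulT u (invT u)) u = u /\ mulT (mulT (invT u) u) (invT u) = invT u.
Hypothesis invT_unique : forall u v,
  mulT (mulT u v) u = u -> mulT (mulT v u) v = v -> v = invT u.

Definition asym_inv (x : S * T) : S * T := (sigma (invT x.2) (invS x.1), invT x.2).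

Lemma sigma_idem e a : mulT e e = e -> sigma e a = a.
Proof. by move=> ee; apply: (sigma_inj e); rewrite -sigma_action ee. Qed.

Lemma sigma_mulTV u a : sigma (mulT u (invT u)) a = a.
Proof. by apply: sigma_idem; rewrite mulTA (proj1 (invT_regular u)). Qed.

Lemma sigma_mulVT u a : sigma (mulT (invT u) u) a = a.
Proof. by apply: sigma_idem; rewrite mulTA (proj2 (invT_regular u)). Qed.

Lemma asym_inv_regular x :
  mulST (mulST x (asym_inv x)) x = x /\
  mulST (mulST (asym_inv x) x) (asym_inv x) = asym_inv x.
Proof.
case: x => a u; rewrite /asym_mul /=; split.
- by rewrite -sigma_action !sigma_mulTV (proj1 (invS_regular a)) (proj1 (invT_regular u)).
- by rewrite -sigmaM sigma_mulVT -sigmaM (proj2 (invS_regular a)) (proj2 (invT_regular u)).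
Qed.

Lemma asym_inv_unique x y :
  mulST (mulST x y) x = x -> mulST (mulST y x) y = y -> y = asym_inv x.
Proof.
case: x y => [a u] [b v]; rewrite /asym_mul /= => -[xyx_a xyx_u] [yxy_b yxy_v].
have v_inv := invT_unique _ _ xyx_u yxy_v; subst v.
rewrite sigma_mulTV in xyx_a; rewrite sigma_mulVT in yxy_b.
have /(f_equal (sigma u)) : mulS (mulS b (sigma (invT u) a)) b = b by [].
rewrite !sigmaM -sigma_action sigma_mulTV => yxy_ub.
by rewrite /asym_inv -(invS_unique _ _ xyx_a yxy_ub) -sigma_action sigma_mulVT.
Qed.

Lemma asym_inverse_semigroup : is_inverse_semigroup mulST asym_inv.
Proof.
split; first exact: asym_mulA.
by split; [exact: asym_inv_regular | exact: asym_inv_unique].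
Qed.

Hypothesis sigmaD : forall u a b, sigma u (addS a b) = addS (sigma u a) (sigma u b).
Hypothesis semibraceS : forall a b c,
  mulS a (addS b c) = addS (mulS a b) (mulS a (addS (invS a) c)).
Hypothesis semibraceT : forall u v w,
  mulT u (addT v w) = addT (mulT u v) (mulT u (addT (invT u) w)).
Hypothesis bb_compatible : forall (a b c : S) (u v : T),
  let l := lambda addS mulS invS a (sigma u c) in
  addT (addT (bb (mulS a (sigma u b)) l) (delta l (mulT u v)))
       (mulT u (addT (bb (sigma (invT u) (invS a)) c) (delta c (invT u))))
  = mulT u (addT (bb b c) (delta c v)).

Lemma asym_lambda_fst a u c :
  mulS a (sigma u (addS (sigma (invT u) (invS a)) c)) = lambda addS mulS invS a (sigma u c).
Proof. by rewrite /lambda sigmaD -sigma_action sigma_mulTV. Qed.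

Lemma asym_mul_addr x y z :
  mulST x (addST y z) = addST (mulST x y) (mulST x (addST (asym_inv x) z)).
Proof.
case: x y z => [a u] [b v] [c w]; rewrite /asym_mul /asym_add /= asym_lambda_fst.
congr (_, _); first by rewrite sigmaD semibraceS.
rewrite (semibraceT u (addT (bb b c) (delta c v)) w).
rewrite (semibraceT u (addT (bb (sigma (invT u) (invS a)) c) (delta c (invT u))) w).
by rewrite -(bb_compatible a b c u v) addTA.
Qed.

End AsymmetricProduct.

Theorem theorem52 (S T : Type)
    (addS mulS : S -> S -> S) (invS : S -> S)
    (addT mulT : T -> T -> T) (invT : T -> T)
    (sigma : T -> S -> S) (delta : S -> T -> T) (bb : S -> S -> T) :
  is_left_inverse_semibrace addS mulS invS ->
  is_left_inverse_semibrace addT mulT invT ->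
  (* sigma : (T, .) -> Aut(S) is a homomorphism; sigma u a = ^u a *)
  (forall u, is_semibrace_automorphism addS mulS (sigma u)) ->
  (forall u v a, sigma (mulT u v) a = sigma u (sigma v a)) ->
  (* delta : S -> End(T, +); delta a u = u^a *)
  (forall a, is_semigroup_endomorphism addT (delta a)) ->
  is_delta_cocycle addS addT delta bb ->
  (forall (a b c : S) (u v : T),
     let l := lambda addS mulS invS a (sigma u c) in
     addT (addT (bb (mulS a (sigma u b)) l) (delta l (mulT u v)))
          (mulT u (addT (bb (sigma (invT u) (invS a)) c) (delta c (invT u))))
     = mulT u (addT (bb b c) (delta c v))) ->
  exists invST : S * T -> S * T,
    is_left_inverse_semibrace (asym_add addS addT delta bb)
                              (asym_mul mulS mulT sigma) invST.
Proof.
move=> [addSA [[mulSA [invS_regular invS_unique]] semibraceS]].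
move=> [addTA [[mulTA [invT_regular invT_unique]] semibraceT]].
move=> sigma_aut sigma_action delta_endo bb_cocycle bb_compatible.
have sigma_inj u : injective (sigma u) by case: (sigma_aut u) => /bij_inj.
have sigmaD u : {morph sigma u : a b / addS a b} by case: (sigma_aut u) => _ [].
have sigmaM u : {morph sigma u : a b / mulS a b} by case: (sigma_aut u) => _ [].
exists (@asym_inv S T invS invT sigma); split; last split.
- exact: asym_addA.
- exact: asym_inverse_semigroup.
- exact: asym_mul_addr.
Qed.
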